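(* Fix integers $t\geq 1$ and $r\geq 1$. Then, as $m\to\infty$ (with $m\geq r$), \[ R_t(r,m) \geq \left(1-\frac{1}{2^t}\right)2^m-\frac{\sqrt{2t(2^t-1) \ln 2}}{2^t\sqrt{r!}}\, m^{r/2}\,2^{m/2}(1+o(1)). \]
   Context: For a $t\times n$ matrix $\mathbf{v}$ over $\mathbb{F}_q$ with rows $\overline{v}_1,\dots,\overline{v}_t$, its $t$-weight is $\mathrm{wt}^{(t)}(\mathbf{v})=\left|\bigcup_{i=1}^t \mathrm{supp}(\overline{v}_i)\right|$, and $d^{(t)}(\mathbf{u},\mathbf{v})=\mathrm{wt}^{(t)}(\mathbf{u}-\mathbf{v})$. For a linear code $C\subseteq\mathbb{F}_q^n$ and $t\in\mathbb{N}$, let $C^t$ be the set of $t\times n$ matrices all of whose rows lie in $C$. The $t$-th generalized covering radius $R_t(C)$ is the smallest integer $\rho$ such that for every $\mathbf{v}\in\mathbb{F}_q^{t\times n}$ there is $\mathbf{c}\in C^t$ with $d^{(t)}(\mathbf{v},\mathbf{c})\leq \rho$. Binary Reed–Muller codes $\mathrm{RM}(r,m)\subseteq\mathbb{F}_2^{2^m}$ ($0\le r\le m$) are defined recursively: $\mathrm{RM}(0,m)=\{\overline{0},\overline{1}\}$, $\mathrm{RM}(m,m)=\mathbb{F}_2^{2^m}$, and for $1\leq r\leq m-1$, $\mathrm{RM}(r,m)=\{(\overline{u},\overline{u}+\overline{v}) : \overline{u}\in \mathrm{RM}(r,m-1),\ \overline{v}\in\mathrm{RM}(r-1,m-1)\}$.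 It is a linear code of length $2^m$ and dimension $\sum_{i=0}^r\binom{m}{i}$. Write $R_t(r,m)=R_t(\mathrm{RM}(r,m))$. *)

From mathcomp Require Import all_boot.
Set Implicit Arguments. Unset Strict Implicit. Unset Printing Implicit Defensive.

(* Binary words of length n: n.-tuple bool (bool = F_2, addition = xor). *)
Notation word n := (n.-tuple bool).

(* Binary Reed-Muller code RM(r,m) as a set of words of length 2^m,
   following the recursive definition:
   RM(0,m) = {0,1}, RM(m,m) = F_2^(2^m),
   RM(r,m) = {(u, u+v) : u in RM(r,m-1), v in RM(r-1,m-1)} for 1 <= r <= m-1.
   (For r > m we also return the whole space; it is never used.) *)
Fixpoint RM_aux (m : nat) : nat -> {set word (2 ^ m)} :=
  match m return nat -> {set word (2 ^ m)} with
  | 0 => fun _ => setT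
  | m'.+1 => fun r =>
      match r with
      | 0 => [set w : word (2 ^ m'.+1) |
               (val w == nseq (2 ^ m'.+1) false) || (val w == nseq (2 ^ m'.+1) true)]
      | r'.+1 =>
          if m'.+1 <= r'.+1 then setT
          else [set w : word (2 ^ m'.+1) |
                 [exists u : word (2 ^ m'), exists v : word (2 ^ m'),
                    [&& u \in RM_aux m' r'.+1, v \in RM_aux m' r' &
                        val w == val u ++ [seq (p.1 (+) p.2) | p <- zip (val u) (val v)]]]]
      end
  end.

Definition RM (r m : nat) : {set word (2 ^ m)} := RM_aux m r.

Definition mat (t n : nat) := {ffun 'I_t -> word n}.

Definition twt (t n : nat) (v : mat t n) : nat :=
  #|[set j : 'I_n | [exists i : 'I_t, tnth (v i) j]]|.

Definition msub (t n : nat) (u v : mat t n) : mat t n :=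
  [ffun i => [tuple of [seq (p.1 (+) p.2) | p <- zip (val (u i)) (val (v i))]]].

Definition tdist (t n : nat) (u v : mat t n) : nat := twt (msub u v).

Definition inCt (t n : nat) (C : {set word n}) (c : mat t n) : bool :=
  [forall i : 'I_t, c i \in C].

Definition covers (t n : nat) (C : {set word n}) (rho : nat) : bool :=
  [forall v : mat t n, [exists c : mat t n, inCt C c && (tdist v c <= rho)]].

(* The t-th generalized covering radius: the smallest rho with covers rho.
   Computed as the first rho in 0..n with covers rho (for nonempty C,
   rho = n always works, so this is exactly the minimum). *)
Definition Rt (t n : nat) (C : {set word n}) : nat :=
  find (covers t C) (iota 0 n.+1).

Definition Rtrm (t r m : nat) : nat := Rt t (RM r m).

(* Sphere covering in the t-metric: if the t-balls of radius rho around C^t cover all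
   t x n matrices, then 2^(nt) <= |C|^t |B_rho|, and |RM(r,m)| <= 2^K with
   K = sum_(i<=r) C(m,i) ~ m^r/r!.  The columns of a t x n matrix range independently
   over F_2^t, so sum_w x^(wt_t w) = (1 + (2^t-1) x)^n, and the Chernoff trick gives
   |B_rho| <= e^(rho s) (1 + (2^t-1) e^(-s))^n for every s >= 0.  Writing
   q = 2^-t, p = 1 - q and bounding the log-moment generating function of a centred
   Bernoulli(p) variable to second order yields
     rho >= n p - K t ln 2 / s - n p q s (p e^(ps) + q) / 2,
   and the choice s ~ sqrt(2 K t ln 2 / (n p q)), with n = 2^m, gives the theorem. *)

From Stdlib Require Import Reals Lra.
From mathcomp Require Import all_boot ssralg ssrnum Rstruct.
From Coquelicot Require Import Coquelicot.
Set Implicit Arguments. Unset Strict Implicit. Unset Printing Implicit Defensive.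

Open Scope R_scope.

Section SphereCovering.
Local Open Scope nat_scope.

Lemma tnth_msub t n (u v : mat t n) i j :
  tnth (msub u v i) j = tnth (u i) j (+) tnth (v i) j.
Proof.
rewrite ffunE (tnth_nth false) /= (nth_map (false, false)); last first.
  by rewrite size_zip !size_tuple minnn.
by rewrite nth_zip ?size_tuple // -!tnth_nth.
Qed.

Lemma msubK t n (c : mat t n) : involutive (fun v => msub v c).
Proof.
move=> v; apply/ffunP => i; apply: eq_from_tnth => j.
by rewrite !tnth_msub -addbA addbb addbF.
Qed.

Lemma card_mat t n : #|{: mat t n}| = (2 ^ n) ^ t.
Proof. by rewrite /mat card_ffun card_tuple card_bool card_ord. Qed.

Definition tball t n rho := [set w : mat t n | twt w <= rho].

Lemma card_tdist_ball t n (c : mat t n) rho :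
  #|[set v | tdist v c <= rho]| = #|tball t n rho|.
Proof.
rewrite -(card_preimset (tball t n rho) (inv_inj (msubK c))); apply: eq_card => v.
by rewrite !inE.
Qed.

Lemma card_Ct t n (C : {set word n}) : #|[set c : mat t n | inCt C c]| = #|C| ^ t.
Proof.
rewrite -[in RHS](card_ord t) -card_ffun_on; apply: eq_card => c.
by rewrite inE; apply/forallP/ffun_onP.
Qed.

Lemma leq_card_bigcup (I T : finType) (A : {pred I}) (F : I -> {set T}) :
  #|\bigcup_(i in A) F i| <= \sum_(i in A) #|F i|.
Proof.
elim/big_rec2: _ => [|i B k _ IH]; first by rewrite cards0.
exact: leq_trans (leq_card_setU _ _) (leq_add (leqnn _) IH).
Qed.

Lemma sphere_covering_bound t n (C : {set word n}) rho : covers t C rho ->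
  (2 ^ n) ^ t <= #|C| ^ t * #|tball t n rho|.
Proof.
move=> /forallP cov; rewrite -card_mat -card_Ct -sum_nat_const.
under eq_bigr => c _ do rewrite -(card_tdist_ball c).
apply: leq_trans (leq_card_bigcup _ _); apply/subset_leq_card/subsetP => v _.
have /existsP [c /andP [Cc vc]] := cov v.
by apply/bigcupP; exists c; rewrite inE.
Qed.

Lemma Rt_covers_or t n (C : {set word n}) : covers t C (Rt t C) \/ Rt t C = n.+1.
Proof.
rewrite /Rt; have := has_find (covers t C) (seq.iota 0 n.+1).
have := find_size (covers t C) (seq.iota 0 n.+1).
rewrite size_iota; set i := find _ _ => ile.
case: (boolP (has _ _)) => [hs /esym ilt | _ /esym/negbT].
  by left; move: (nth_find 0 hs); rewrite -/i nth_iota ?add0n.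
by rewrite -leqNgt => ige; right; apply/eqP; rewrite eqn_leq ile.
Qed.

End SphereCovering.

Section ReedMullerSize.
Local Open Scope nat_scope.

Definition dimRM r m := \sum_(i < r.+1) 'C(m, i).

Lemma dimRM0 m : dimRM 0 m = 1.
Proof. by rewrite /dimRM big_ord1 bin0. Qed.

Lemma dimRM0n r : dimRM r 0 = 1.
Proof. by rewrite /dimRM big_ord_recl bin0 big1 // => i _; rewrite bin0n. Qed.

Lemma dimRMSS r m : dimRM r.+1 m.+1 = dimRM r.+1 m + dimRM r m.
Proof.
rewrite /dimRM big_ord_recl [in RHS]big_ord_recl !bin0.
under eq_bigr => i _ do rewrite lift0 binS.
by rewrite big_split /= addnA.
Qed.

Lemma exp2_leq_dimRM r m : m <= r -> 2 ^ m <= dimRM r m.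
Proof.
move=> le_mr; have -> : 2 ^ m = \sum_(i < m.+1) 'C(m, i).
  by rewrite -[2]/(1 + 1) expnDn; apply: eq_bigr => i _; rewrite !exp1n !muln1.
rewrite /dimRM (big_ord_widen r.+1 (fun i => 'C(m, i))) //.
by rewrite [X in _ <= X](bigID (fun i : 'I_r.+1 => i < m.+1)) leq_addr.
Qed.

Lemma card_RM_le r m : #|RM r m| <= 2 ^ dimRM r m.
Proof.
rewrite /RM; elim: m r => [|m IH] [|r] /=;
  rewrite ?cardsT ?card_tuple ?card_bool ?dimRM0n ?dimRM0 //.
- apply: leq_trans (_ : #|[set nseq_tuple (2 ^ m.+1) b | b : bool]| <= _).
    apply/subset_leq_card/subsetP => w; rewrite inE => /orP [] /eqP wE;
      apply/imsetP; [exists false | exists true] => //; exact: val_inj.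
  by apply: leq_trans (leq_imset_card _ _) _; rewrite ?cardsT card_bool.
- case: ifP => [le_mr | _].
    by rewrite cardsT card_tuple card_bool leq_exp2l // exp2_leq_dimRM.
  pose plotkin (p : word (2 ^ m) * word (2 ^ m)) : word (2 ^ m.+1) :=
    insubd (nseq_tuple _ false) (val p.1 ++ [seq q.1 (+) q.2 | q <- zip (val p.1) (val p.2)]).
  apply: leq_trans (_ : #|plotkin @: setX (RM_aux m r.+1) (RM_aux m r)| <= _).
    apply/subset_leq_card/subsetP => w; rewrite inE.
    case/existsP => u /existsP [v /and3P [hu hv /eqP wE]].
    apply/imsetP; exists (u, v); first by rewrite inE hu hv.
    by apply: val_inj; rewrite /plotkin val_insubd -wE size_tuple eqxx.
  apply: leq_trans (leq_imset_card _ _) _.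
  by rewrite cardsX dimRMSS expnD leq_mul.
Qed.

Lemma bin_fact_leq_expn m i : 'C(m, i) * i`! <= m ^ i.
Proof.
rewrite bin_ffact ffact_prod -[in m ^ i](card_ord i) -prod_nat_const.
by apply: leq_prod => j _; exact: leq_subr.
Qed.

Lemma dimRM_leq r m : 0 < m -> dimRM r.+1 m <= 'C(m, r.+1) + r.+1 * m ^ r.
Proof.
move=> m_gt0; rewrite /dimRM big_ord_recr /= addnC leq_add2l.
rewrite -[X in _ <= X * _](card_ord r.+1) -sum_nat_const; apply: leq_sum => i _.
apply: leq_trans (_ : m ^ i <= _); last by rewrite leq_pexp2l // -ltnS.
by apply: leq_trans (bin_fact_leq_expn m i); rewrite leq_pmulr // fact_gt0.
Qed.

Lemma expn_leq_exp2 m k : 0 < k -> m ^ k <= k ^ k * 2 ^ m.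
Proof.
move=> k_gt0; set a := m %/ k.
apply: leq_trans (_ : (a.+1 * k) ^ k <= _); first by rewrite leq_exp2r // ltnW ?ltn_ceil.
rewrite expnMn [_ * k ^ k]mulnC leq_mul //.
apply: leq_trans (_ : (2 ^ a) ^ k <= _); first by rewrite leq_exp2r // ltn_expl.
by rewrite -expnM leq_exp2l // leq_trunc_div.
Qed.

End ReedMullerSize.

Section WeightEnumerator.
Import order.Order.TTheory GRing.Theory Num.Theory.
Local Open Scope ring_scope.

Definition mat_of_cols t n (F : {ffun 'I_n -> {ffun 'I_t -> bool}}) : mat t n :=
  [ffun i => [tuple F j i | j < n]].

Definition cols t n (w : mat t n) : {ffun 'I_n -> {ffun 'I_t -> bool}} :=
  [ffun j => [ffun i => tnth (w i) j]].

Lemma mat_of_colsK t n : cancel (@mat_of_cols t n) (@cols t n).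
Proof. by move=> F; apply/ffunP => j; apply/ffunP => i; rewrite !ffunE tnth_mktuple. Qed.

Lemma colsK t n : cancel (@cols t n) (@mat_of_cols t n).
Proof.
by move=> w; apply/ffunP => i; apply: eq_from_tnth => j; rewrite !ffunE tnth_mktuple !ffunE.
Qed.

Lemma twt_mat_of_cols t n F :
  twt (@mat_of_cols t n F) = #|[set j | F j != [ffun => false]]|.
Proof.
apply: eq_card => j; rewrite !inE.
under eq_existsb => i do rewrite ffunE tnth_mktuple.
rewrite -[[exists _, _]]negbK negb_exists; congr (~~ _).
apply/forallP/eqP => [Fj0 | -> i]; last by rewrite ffunE.
by apply/ffunP => i; rewrite ffunE; apply/negbTE.
Qed.

Lemma sum_pow_twt (R : comPzSemiRingType) t n (x : R) :
  \sum_(w : mat t n) x ^+ twt w = (1 + (2 ^ t - 1)%N%:R * x) ^+ n.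
Proof.
have cols_bij : bijective (@mat_of_cols t n).
  by exists (@cols t n); [exact: mat_of_colsK | exact: colsK].
rewrite (reindex _ (onW_bij _ cols_bij)).
under eq_bigr => F _ do rewrite twt_mat_of_cols -prodr_const big_mkcond /=.
under eq_bigr => F _ do under eq_bigr => j _ do rewrite inE.
rewrite -(bigA_distr_bigA
  (fun _ (c : {ffun 'I_t -> bool}) => if c != [ffun => false] then x else 1)).
rewrite prodr_const card_ord (bigD1 [ffun => false]) //= eqxx /=.
rewrite (eq_bigr (fun _ => x)) => [|c /negbTE-> //]; rewrite sumr_const mulr_natl.
congr ((1 + _ *+ _) ^+ _); have := cardC1 ([ffun => false] : {ffun 'I_t -> bool}).
by rewrite card_ffun card_bool card_ord subn1 => <-; apply: eq_card.
Qed.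

Lemma card_tball_weighted_le (R : numDomainType) t n rho (x : R) : 0 <= x -> x <= 1 ->
  #|tball t n rho|%:R * x ^+ rho <= (1 + (2 ^ t - 1)%N%:R * x) ^+ n.
Proof.
move=> x_ge0 x_le1; rewrite -sum_pow_twt mulr_natl -sumr_const.
apply: le_trans (_ : \sum_(w in tball t n rho) x ^+ twt w <= _).
  by apply: ler_sum => w; rewrite inE => w_rho; exact: ler_wiXn2l.
rewrite [X in _ <= X](bigID (mem (tball t n rho))) /= lerDl.
by apply: sumr_ge0 => w _; exact: exprn_ge0.
Qed.

End WeightEnumerator.

Lemma exp_le1 x : x <= 0 -> exp x <= 1.
Proof.
rewrite -exp_0 => /Rle_lt_or_eq_dec [/exp_increasing/Rlt_le // | ->]; exact: Rle_refl.
Qed.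

Lemma exp_le_taylor2_nonneg x : 0 <= x -> exp x <= 1 + x + x ^ 2 * exp x / 2.
Proof.
move=> x_ge0; case: (Req_dec x 0) => [->|x_neq0]; first by rewrite exp_0; lra.
pose g y := exp (- y) * (1 + y) + y ^ 2 / 2 - 1.
have g'E c : derivable_pt_lim g c (c * (1 - exp (- c))).
  by apply/is_derive_Reals; rewrite /g; auto_derive; [|field].
have [c [c_ge0 [_ gxE]]] := MVT_cor3 g _ 0 x ltac:(lra) (fun c _ _ => g'E c).
have expN_le1 : exp (- c) <= 1 by apply: exp_le1; lra.
have gx_ge0 : 0 <= g x.
  have slope_ge0 : 0 <= c * (1 - exp (- c)) by apply: Rmult_le_pos; lra.
  by rewrite gxE /g Ropp_0 exp_0; nra.
have : exp x * exp (- x) = 1 by rewrite -exp_plus Rplus_opp_r exp_0.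
have := exp_pos x; rewrite /g in gx_ge0; nra.
Qed.

Lemma exp_le_taylor2_nonpos x : x <= 0 -> exp x <= 1 + x + x ^ 2 / 2.
Proof.
move=> x_le0; case: (Req_dec x 0) => [->|x_neq0]; first by rewrite exp_0; lra.
pose h y := 1 + y + y ^ 2 / 2 - exp y.
have h'E c : derivable_pt_lim h c (1 + c - exp c).
  by apply/is_derive_Reals; rewrite /h; auto_derive; [|field].
have [c [_ [_ h0E]]] := MVT_cor3 h _ x 0 ltac:(lra) (fun c _ _ => h'E c).
have := exp_ineq1_le c; rewrite /h exp_0 in h0E; nra.
Qed.

Lemma bernoulli_mgf_le p q s : 0 <= p -> 0 <= q -> p + q = 1 -> 0 <= s ->
  q * exp (p * s) + p * exp (- (q * s))
    <= 1 + p * q * s ^ 2 * (p * exp (p * s) + q) / 2.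
Proof.
move=> p_ge0 q_ge0 pq1 s_ge0.
have := Rmult_le_compat_l q _ _ q_ge0 (@exp_le_taylor2_nonneg (p * s) ltac:(nra)).
have := Rmult_le_compat_l p _ _ p_ge0 (@exp_le_taylor2_nonpos (- (q * s)) ltac:(nra)).
have -> : q = 1 - p by lra.
lra.
Qed.

Lemma ln_1_add_exp_le p q s : 0 <= p -> 0 < q -> p + q = 1 -> 0 <= s ->
  ln (1 + p / q * exp (- s))
    <= - ln q - p * s + p * q * s ^ 2 * (p * exp (p * s) + q) / 2.
Proof.
move=> p_ge0 q_gt0 pq1 s_ge0.
set M := q * exp (p * s) + p * exp (- (q * s)).
have M_gt0 : 0 < M by have := exp_pos (p * s); have := exp_pos (- (q * s)); rewrite /M; nra.
have -> : 1 + p / q * exp (- s) = / q * exp (- (p * s)) * M.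
  have -> : - s = - (p * s) + - (q * s).
    by rewrite -Ropp_plus_distr -Rmult_plus_distr_r pq1 Rmult_1_l.
  have EF : exp (- (p * s)) * exp (p * s) = 1 by rewrite -exp_plus Rplus_opp_l exp_0.
  rewrite exp_plus /M; transitivity
    (q / q * (exp (- (p * s)) * exp (p * s)) + p / q * (exp (- (p * s)) * exp (- (q * s)))).
    by rewrite EF; field; lra.
  by field; lra.
have qE_gt0 : 0 < / q * exp (- (p * s)).
  by apply: Rmult_lt_0_compat; [exact: Rinv_0_lt_compat | exact: exp_pos].
rewrite (ln_mult _ _ qE_gt0 M_gt0) (ln_mult _ _ (Rinv_0_lt_compat _ q_gt0) (exp_pos _)).
rewrite ln_Rinv // ln_exp.
have : ln M <= p * q * s ^ 2 * (p * exp (p * s) + q) / 2.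
  rewrite -[X in _ <= X]ln_exp; apply: ln_le => //.
  exact: Rle_trans (bernoulli_mgf_le p_ge0 (Rlt_le _ _ q_gt0) pq1 s_ge0) (exp_ineq1_le _).
lra.
Qed.

Lemma INR_expn a b : INR (a ^ b)%N = INR a ^ b.
Proof. by rewrite RpowE !INRE GRing.natrX. Qed.

Lemma INR_exp2 k : INR (2 ^ k)%N = 2 ^ k.
Proof. by rewrite INR_expn; congr (_ ^ _); rewrite /=; ring. Qed.

Section CoveringRadiusBound.
Variable t : nat.
Let q := / 2 ^ t.
Let p := 1 - q.

Lemma card_tball_weighted_leR n rho x : 0 <= x <= 1 ->
  INR #|tball t n rho| * x ^ rho <= (1 + (2 ^ t - 1) * x) ^ n.
Proof.
move=> [/RleP x_ge0 /RleP x_le1].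
have /RleP := card_tball_weighted_le t n rho x_ge0 x_le1.
by rewrite -!RpowE -!INRE minus_INR ?INR_expn //; apply/leP; rewrite expn_gt0.
Qed.

Lemma covering_ln_bound n k (C : {set word n}) rho s :
  covers t C rho -> (#|C| <= 2 ^ k)%N -> 0 <= s ->
  INR n * INR t * ln 2 - INR rho * s
    <= INR k * INR t * ln 2 + INR n * ln (1 + (2 ^ t - 1) * exp (- s)).
Proof.
move=> cov card_C s_ge0.
have nat_bound : ((2 ^ n) ^ t <= (2 ^ k) ^ t * #|tball t n rho|)%N.
  apply: leq_trans (sphere_covering_bound cov) (leq_mul _ (leqnn _)).
  by case: (t) => // t'; rewrite leq_exp2r.
have [x_gt0 x_le1] : 0 < exp (- s) <= 1.
  by split; [exact: exp_pos | apply: exp_le1; lra].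
have exp2_gt0 u : 0 < 2 ^ u by apply: pow_lt; lra.
have real_bound : (2 ^ n) ^ t * exp (- s) ^ rho <= (2 ^ k) ^ t * (1 + (2 ^ t - 1) * exp (- s)) ^ n.
  apply: Rle_trans (_ : (2 ^ k) ^ t * INR #|tball t n rho| * exp (- s) ^ rho <= _).
    apply: Rmult_le_compat_r; first by apply: pow_le; lra.
    by have /leP/le_INR := nat_bound; rewrite mult_INR !INR_expn.
  rewrite Rmult_assoc; apply: Rmult_le_compat_l; first by apply/pow_le/Rlt_le/exp2_gt0.
  by apply: card_tball_weighted_leR; lra.
have base_gt0 : 0 < 1 + (2 ^ t - 1) * exp (- s) by have := pow_R1_Rle 2 t ltac:(lra); nra.
have := ln_le _ _ (Rmult_lt_0_compat _ _ (pow_lt _ t (exp2_gt0 n)) (pow_lt _ rho x_gt0)) real_bound.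
rewrite !ln_mult ?ln_pow ?ln_exp //; try apply: pow_lt => //; try lra.
Qed.

Lemma Rt_lower_bound n k (C : {set word n}) s : (#|C| <= 2 ^ k)%N -> 0 < s ->
  INR n * p - INR k * INR t * ln 2 / s - INR n * p * q * s * (p * exp (p * s) + q) / 2
    <= INR (Rt t C).
Proof.
move=> card_C s_gt0.
have exp2t_ge1 : 1 <= 2 ^ t by apply: pow_R1_Rle; lra.
have q_gt0 : 0 < q by apply: Rinv_0_lt_compat; lra.
have q_le1 : q <= 1 by rewrite /q -Rinv_1; apply: Rinv_le_contravar; lra.
have p_ge0 : 0 <= p by rewrite /p; lra.
have pq1 : p + q = 1 by rewrite /p; ring.
(* Rt t C = n.+1 only when nothing covers, i.e. C = set0; the bound is then trivial. *)
case: (Rt_covers_or t C) => [cov | ->]; last first.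
  have : 0 < p * exp (p * s) + q by have := exp_pos (p * s); nra.
  have := ln_lt_2; have := pos_INR n; move=> *.
  have : 0 <= INR n * p * q * s * (p * exp (p * s) + q).
    by repeat apply: Rmult_le_pos; lra.
  have : 0 <= INR k * INR t * ln 2 / s.
    by apply: Rdiv_le_0_compat => //; repeat apply: Rmult_le_pos; try apply: pos_INR; lra.
  by rewrite S_INR; nra.
have := covering_ln_bound cov card_C (Rlt_le _ _ s_gt0).
have := ln_1_add_exp_le p_ge0 q_gt0 pq1 (Rlt_le _ _ s_gt0).
have -> : p / q = 2 ^ t - 1 by rewrite /p /q; field; lra.
have -> : - ln q = INR t * ln 2 by rewrite /q ln_Rinv ?ln_pow; lra.
move=> /(Rmult_le_compat_l _ _ _ (pos_INR n)) ln_le covering.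
apply: (Rmult_le_reg_r s) => //.
have -> : (INR n * p - INR k * INR t * ln 2 / s - INR n * p * q * s * (p * exp (p * s) + q) / 2) * s
  = INR n * p * s - INR k * INR t * ln 2 - INR n * (p * q * s ^ 2 * (p * exp (p * s) + q) / 2).
  by field; lra.
lra.
Qed.

End CoveringRadiusBound.

Lemma INR_dimRM_le r m : (0 < r)%N -> (0 < m)%N ->
  INR (dimRM r m) <= INR m ^ r / INR r`! * (1 + INR r * INR r`! / INR m).
Proof.
case: r => [//|r] _ m_gt0.
have m_gt0R : 0 < INR m by apply/lt_0_INR/ltP.
have f_gt0 : 0 < INR r.+1`! by apply/lt_0_INR/ltP/fact_gt0.
have /leP/le_INR := dimRM_leq r m_gt0; rewrite plus_INR mult_INR INR_expn => dim_le.
have /leP/le_INR := bin_fact_leq_expn m r.+1; rewrite mult_INR INR_expn => bin_le.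
have bin_leR : INR 'C(m, r.+1) <= INR m ^ r.+1 / INR r.+1`!.
  apply: (Rmult_le_reg_r (INR r.+1`!)) => //.
  by rewrite /Rdiv Rmult_assoc Rinv_l ?Rmult_1_r //; lra.
have -> : INR m ^ r.+1 / INR r.+1`! * (1 + INR r.+1 * INR r.+1`! / INR m)
  = INR m ^ r.+1 / INR r.+1`! + INR r.+1 * INR m ^ r by rewrite /=; field; lra.
lra.
Qed.

Lemma is_lim_seq_pow_div_exp2 r : is_lim_seq (fun m => INR m ^ r / 2 ^ m) 0.
Proof.
set D := INR r.+1 ^ r.+1.
apply: (is_lim_seq_le_le_loc (fun _ => 0) _ (fun m => D * / INR m)).
- exists 1%N => m /leP m_ge1.
  have m_gt0 : 0 < INR m by apply/lt_0_INR/ltP.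
  have exp2_gt0 : 0 < 2 ^ m by apply: pow_lt; lra.
  split; first by apply: Rdiv_le_0_compat => //; apply: pow_le; lra.
  have /leP/le_INR := expn_leq_exp2 m (ltn0Sn r); rewrite mult_INR INR_exp2 !INR_expn -/D => pow_le.
  apply: (Rmult_le_reg_r (INR m * 2 ^ m)); first exact: Rmult_lt_0_compat.
  have -> : INR m ^ r / 2 ^ m * (INR m * 2 ^ m) = INR m ^ r.+1 by rewrite /=; field; lra.
  by have -> : D * / INR m * (INR m * 2 ^ m) = D * 2 ^ m by field; lra.
- exact: is_lim_seq_const.
- have := is_lim_seq_scal_l _ D _ (is_lim_seq_inv _ _ is_lim_seq_INR ltac:(discriminate)).
  by rewrite /= Rmult_0_r.
Qed.

Lemma sqrt_pow x n : 0 <= x -> sqrt (x ^ n) = sqrt x ^ n.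
Proof.
move=> x_ge0; elim: n => [|n IH]; first exact: sqrt_1.
by rewrite /= sqrt_mult ?IH //; apply: pow_le.
Qed.

Section ReedMullerCoveringRadius.
Variables t r : nat.
Let q := / 2 ^ t.
Let p := 1 - q.
Let c := sqrt (2 * INR t * (2 ^ t - 1) * ln 2) / (2 ^ t * sqrt (INR r`!)).

(* tilt m = sqrt (2 a / b) minimises a / s + b s / 2 for a = t ln 2 m^r / r! and
   b = 2^m p q. *)
Definition tilt m := c / (p * q) * sqrt (INR m ^ r / 2 ^ m).

Definition rel_err m := (INR r * INR r`! / INR m + p * (exp (p * tilt m) - 1)) / 2.

Lemma rel_err_cv : Un_cv rel_err 0.
Proof.
apply/is_lim_seq_Reals.
have tilt_cv : is_lim_seq tilt 0.
  have := is_lim_seq_continuous _ _ _ (continuity_pt_sqrt 0 (Rle_refl 0))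
    (is_lim_seq_pow_div_exp2 r).
  by move/(is_lim_seq_scal_l _ (c / (p * q))); rewrite sqrt_0 /= Rmult_0_r.
have exp_cv : is_lim_seq (fun m => exp (p * tilt m)) 1.
  rewrite -exp_0 -(Rmult_0_r p).
  apply: is_lim_seq_continuous; first exact: derivable_continuous_pt (derivable_pt_exp _).
  exact: (is_lim_seq_scal_l _ p _ tilt_cv).
have e1_cv : is_lim_seq (fun m => INR r * INR r`! / INR m) 0.
  have := is_lim_seq_scal_l _ (INR r * INR r`!) _
    (is_lim_seq_inv _ _ is_lim_seq_INR ltac:(discriminate)).
  by rewrite /= Rmult_0_r.
have := is_lim_seq_scal_r _ (/ 2) _ (is_lim_seq_plus' _ _ _ _ e1_cv
  (is_lim_seq_scal_l _ p _ (is_lim_seq_minus' _ _ _ _ exp_cv (is_lim_seq_const 1)))).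
by rewrite /= Rminus_diag Rmult_0_r Rplus_0_l Rmult_0_l; apply: is_lim_seq_ext.
Qed.

Hypothesis t_gt0 : (0 < t)%N.

Let exp2t_ge2 : 2 <= 2 ^ t.
Proof. by rewrite -[X in X <= _]pow_1; apply: Rle_pow; [lra | apply/leP]. Qed.

Let q_gt0 : 0 < q.
Proof. by apply: Rinv_0_lt_compat; lra. Qed.

Let p_gt0 : 0 < p.
Proof.
have : q <= / 2 by apply: Rinv_le_contravar; lra.
by rewrite /p; lra.
Qed.

Lemma c_gt0 : 0 < c.
Proof.
have := ln_lt_2; have : 1 <= INR t by apply: (le_INR 1); apply/leP.
move=> t_ge1 ln2_gt0; apply: Rdiv_lt_0_compat.
  by apply: sqrt_lt_R0; repeat apply: Rmult_lt_0_compat; lra.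
by apply: Rmult_lt_0_compat; [lra | apply/sqrt_lt_R0/lt_0_INR/ltP/fact_gt0].
Qed.

Lemma tilt_sq m : 2 ^ m * p * q * tilt m ^ 2 = 2 * (INR m ^ r / INR r`! * INR t * ln 2).
Proof.
have exp2_gt0 : 0 < 2 ^ m by apply: pow_lt; lra.
have f_gt0 : 0 < INR r`! by apply/lt_0_INR/ltP/fact_gt0.
have c_sq : c ^ 2 = 2 * INR t * (2 ^ t - 1) * ln 2 / ((2 ^ t) ^ 2 * INR r`!).
  have A_ge0 : 0 <= 2 * INR t * (2 ^ t - 1) * ln 2.
    by have := pos_INR t; have := ln_lt_2; move=> *; repeat apply: Rmult_le_pos; lra.
  have sf_gt0 := sqrt_lt_R0 _ f_gt0.
  rewrite /c -{2}(sqrt_sqrt _ A_ge0) -{2}(sqrt_sqrt _ (Rlt_le _ _ f_gt0)).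
  by field; lra.
rewrite /tilt Rpow_mult_distr pow2_sqrt; last first.
  by apply: Rdiv_le_0_compat => //; apply/pow_le/pos_INR.
transitivity (c ^ 2 * INR m ^ r / (p * q)); first by field; lra.
by rewrite c_sq /p /q; field; lra.
Qed.

Lemma tilt_mul m : 2 ^ m * p * q * tilt m = c * sqrt (INR m) ^ r * sqrt (2 ^ m).
Proof.
have exp2_gt0 : 0 < 2 ^ m by apply: pow_lt; lra.
have z_gt0 := sqrt_lt_R0 _ exp2_gt0; have zz := sqrt_sqrt _ (Rlt_le _ _ exp2_gt0).
rewrite /tilt sqrt_div //; last by apply: pow_le; exact: pos_INR.
rewrite (sqrt_pow r (pos_INR m)) -{1}zz.
by field; lra.
Qed.

Lemma tilt_gt0 m : (0 < m)%N -> 0 < tilt m.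
Proof.
move=> /ltP/lt_0_INR m_gt0; apply: Rmult_lt_0_compat.
  by apply: Rdiv_lt_0_compat; [exact: c_gt0 | exact: Rmult_lt_0_compat].
by apply/sqrt_lt_R0/Rdiv_lt_0_compat; apply: pow_lt; lra.
Qed.

Hypothesis r_gt0 : (0 < r)%N.

Lemma dimRM_div_tilt_le m : (0 < m)%N ->
  INR (dimRM r m) * INR t * ln 2 / tilt m
    <= (1 + INR r * INR r`! / INR m) * (2 ^ m * p * q * tilt m) / 2.
Proof.
move=> m_gt0; have s_gt0 := tilt_gt0 m_gt0; set e1 := INR r * INR r`! / INR m.
apply: (Rmult_le_reg_r (tilt m)) => //.
have -> : INR (dimRM r m) * INR t * ln 2 / tilt m * tilt m
  = INR (dimRM r m) * (INR t * ln 2) by field; lra.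
have -> : (1 + e1) * (2 ^ m * p * q * tilt m) / 2 * tilt m
  = (1 + e1) * (2 ^ m * p * q * tilt m ^ 2) / 2 by field.
rewrite tilt_sq; apply: Rle_trans (_ : INR m ^ r / INR r`! * (1 + e1) * (INR t * ln 2) <= _).
  apply: Rmult_le_compat_r; last exact: INR_dimRM_le.
  by have := pos_INR t; have := ln_lt_2; move=> *; apply: Rmult_le_pos; lra.
by apply: Req_le; field; apply/not_0_INR/eqP; rewrite -lt0n fact_gt0.
Qed.

Lemma Rtrm_lower_bound m : (r <= m)%N ->
  (1 - 1 / 2 ^ t) * 2 ^ m - c * sqrt (INR m) ^ r * sqrt (2 ^ m) * (1 + rel_err m)
    <= INR (Rtrm t r m).
Proof.
move=> r_le_m; have m_gt0 : (0 < m)%N := leq_trans r_gt0 r_le_m.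
have := Rt_lower_bound t (card_RM_le r m) (tilt_gt0 m_gt0).
have := dimRM_div_tilt_le m_gt0.
rewrite INR_exp2 -/q -/p -tilt_mul /Rtrm /rel_err.
have -> : 1 - 1 / 2 ^ t = p by rewrite /p /q /Rdiv Rmult_1_l.
set T := 2 ^ m * p * q * tilt m.
have -> : q = 1 - p by rewrite /p; ring.
lra.
Qed.

End ReedMullerCoveringRadius.

Theorem theorem12 (t r : nat) (ht : leq 1 t) (hr : leq 1 r) :
  exists eps : nat -> R, Un_cv eps 0 /\
    forall m : nat, leq r m ->
      INR (Rtrm t r m) >=
        (1 - 1 / 2 ^ t) * 2 ^ m
        - sqrt (2 * INR t * (2 ^ t - 1) * ln 2) / (2 ^ t * sqrt (INR (factorial r)))
          * (sqrt (INR m)) ^ r * sqrt (2 ^ m) * (1 + eps m).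
Proof.
exists (rel_err t r); split; first exact: rel_err_cv.
by move=> m r_le_m; apply/Rle_ge/Rtrm_lower_bound.
Qed.
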